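(* For all $n\ge0$ and $y_1,\dots,y_n\in M$, $$K^{-1}(y_1\cdots y_n)=\sum_{\pi\ \text{set partition of}\ \{1,\dots,n\}}(y_1\cdots y_n)^\pi .$$
   Context: $\mathbf k$ field of characteristic zero; $(M,\rhd)$ a magmatic algebra; $T(M)$ its tensor algebra (concatenation, unit $\mathbf 1$), with $\rhd$ extended to $T(M)$ by $\mathbf 1\rhd W=W$, $x\rhd(VW)=(x\rhd V)W+V(x\rhd W)$, $(xV)\rhd W=x\rhd(V\rhd W)-(x\rhd V)\rhd W$ ($x\in M$). Gavrilov's $K$-map is the linear map $K:T(M)\to T(M)$ defined recursively by $K(\mathbf 1)=\mathbf 1$, $K(y)=y$ for $y\in M$, and $K(yU)=y\,K(U)-K(y\rhd U)$ for $y\in M$, $U\in T(M)$; it is invertible. For a set partition $\pi$ of $\{1,\dots,n\}$, its blocks $B_1,\dots,B_{|\pi|}$ are ordered so that $\max B_1<\dots<\max B_{|\pi|}$. For a block $B=\{b_1<\dots<b_\ell\}$ set $y_B:=y_{b_1}\rhd\big(y_{b_2}\rhd(\cdots\rhd(y_{b_{\ell-1}}\rhd y_{b_\ell})\cdots)\big)\in M$, and $(y_1\cdots y_n)^\pi:=y_{B_1}y_{B_2}\cdots y_{B_{|\pi|}}\in T(M)$. *)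

From HB Require Import structures.
From mathcomp Require Import all_boot all_order all_algebra.
Set Implicit Arguments.
Unset Strict Implicit.
Unset Printing Implicit Defensive.
Import GRing.Theory.
Local Open Scope ring_scope.

Section PartitionWord.
Variables (F : fieldType) (M : lmodType F) (rhdM : M -> M -> M).

Fixpoint nest_from (x : M) (s : seq M) : M :=
  match s with
  | [::] => x
  | x' :: s' => rhdM x (nest_from x' s')
  end.

Variable n : nat.
Variable y : 'I_n -> M.

(* y_B := y_{b1} ▷ (y_{b2} ▷ (... ▷ (y_{b(l-1)} ▷ y_{bl}))) for B = {b1 < ... < bl};
   the value on the empty block (which never occurs in a partition) is 0. *)
Definition block_val (B : {set 'I_n}) : M :=
  match sort (fun i j : 'I_n => (i <= j)%N) (enum B) with
  | [::] => 0
  | b :: bs => nest_from (y b) (map y bs)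
  end.

Definition block_max (B : {set 'I_n}) : nat := (\max_(i in B) (i : nat))%N.

Definition sorted_blocks (P : {set {set 'I_n}}) : seq {set 'I_n} :=
  sort (fun B C => (block_max B <= block_max C)%N) (enum P).

(* (y_1 ... y_n)^pi := y_{B_1} y_{B_2} ... y_{B_k} in the algebra A *)
Definition part_word (A : algType F) (iota : M -> A) (P : {set {set 'I_n}}) : A :=
  \prod_(B <- sorted_blocks P) iota (block_val B).

End PartitionWord.

From HB Require Import structures.
From mathcomp Require Import all_boot all_order all_algebra.
Import GRing.Theory.

Set Implicit Arguments.
Unset Strict Implicit.
Unset Printing Implicit Defensive.

(* A partition of {0, ..., n} is a partition pi of {1, ..., n}
   together with the choice of where 0 goes: either the singleton {0}, which
   has the smallest maximum and so contributes a leftmost factor y_0, or an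
   existing block B, which keeps its position and turns y_B into y_0 ▷ y_B.
   Since y_0 ▷ _ is a derivation of T(M), the second kind sums to
   y_0 ▷ (y_1 ... y_n)^pi.  Hence the sum S_{n+1} over partitions of {0..n}
   is y_0 S_n + y_0 ▷ S_n, and the recursion defining K gives
   K(S_{n+1}) = y_0 K(S_n) = y_0 y_1 ... y_n. *)

Section ShiftPartition.
Variable n : nat.

Definition shift (B : {set 'I_n}) : {set 'I_n.+1} := lift ord0 @: B.
Definition unshift (B : {set 'I_n.+1}) : {set 'I_n} := lift ord0 @^-1: B.

Lemma lift0_eq0 i : (lift ord0 i == ord0 :> 'I_n.+1) = false.
Proof. by rewrite eq_sym (negbTE (neq_lift _ _)). Qed.

Lemma mem_shift B i : (lift ord0 i \in shift B) = (i \in B).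
Proof. exact/mem_imset/lift_inj. Qed.

Lemma ord0_shift B : (ord0 \in shift B) = false.
Proof. by apply/imsetP=> -[i _ /eqP]; rewrite eq_sym lift0_eq0. Qed.

Lemma shiftK : cancel shift unshift.
Proof. by move=> B; apply/setP=> i; rewrite inE mem_shift. Qed.

Lemma unshiftK B : shift (unshift B) = B :\ ord0.
Proof.
apply/setP=> j; case: (unliftP ord0 j) => [i ->|->]; last by rewrite ord0_shift !inE eqxx.
by rewrite mem_shift !inE lift0_eq0.
Qed.

(* The block [B] of a partition of [{1..n}] after adding [0], which joins the
   block [o]; [o = set0] stands for the new singleton block [{0}]. *)
Definition insert0 (o B : {set 'I_n}) : {set 'I_n.+1} :=
  if B == o then ord0 |: shift B else shift B.

Lemma insert0K o : cancel (insert0 o) unshift.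
Proof.
move=> B; rewrite /insert0; case: eqP => _; last exact: shiftK.
by apply/setP=> i; rewrite !inE mem_shift lift0_eq0.
Qed.

Lemma ord0_insert0 o B : (ord0 \in insert0 o B) = (B == o).
Proof. by rewrite /insert0; case: eqP => _; rewrite ?ord0_shift ?setU11. Qed.

Lemma lift_insert0 o B i : (lift ord0 i \in insert0 o B) = (i \in B).
Proof. by rewrite -{2}(insert0K o B) inE. Qed.

Definition extend (P : {set {set 'I_n}}) o := insert0 o @: (o |: P).
Definition restrict (Q : {set {set 'I_n.+1}}) := (unshift @: Q) :\ set0.
Definition block0 (Q : {set {set 'I_n.+1}}) := unshift (pblock Q ord0).

Lemma partition_restrict Q :
  partition Q [set: 'I_n.+1] -> partition (restrict Q) [set: 'I_n].
Proof.
case/and3P=> /eqP covQ trQ nQ0; apply/and3P; split.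
- apply/eqP/setP=> i; rewrite inE; apply/bigcupP.
  have /bigcupP[B BQ iB] : lift ord0 i \in cover Q by rewrite covQ inE.
  exists (unshift B); last by rewrite inE.
  by rewrite !inE imset_f ?andbT //; apply/set0Pn; exists i; rewrite inE.
- apply/trivIsetP=> _ _ /setD1P[_ /imsetP[B1 B1Q ->]] /setD1P[_ /imsetP[B2 B2Q ->]] ne.
  have neB : B1 != B2 by apply: contraNneq ne => ->.
  move: (trivIsetP trQ _ _ B1Q B2Q neB); rewrite -!setI_eq0 -preimsetI => /eqP->.
  by rewrite preimset0.
- by rewrite !inE eqxx.
Qed.

Lemma mem_setU1_nonempty (P : {set {set 'I_n}}) o B :
  o \in set0 |: P -> B \in o |: P -> B != set0 -> B \in P.
Proof.
rewrite !inE => /orP[/eqP-> | oP] /orP[/eqP-> | //]; last by rewrite oP.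
by rewrite eqxx.
Qed.

Lemma partition_extend P o :
  partition P [set: 'I_n] -> o \in set0 |: P -> partition (extend P o) [set: 'I_n.+1].
Proof.
case/and3P=> /eqP covP trP nP0 oP; apply/and3P; split.
- apply/eqP/setP=> j; rewrite inE; apply/bigcupP.
  case: (unliftP ord0 j) => [i ->|->].
    have /bigcupP[B BP iB] : i \in cover P by rewrite covP inE.
    by exists (insert0 o B); rewrite ?lift_insert0 // imset_f // setU1r.
  by exists (insert0 o o); rewrite ?ord0_insert0 // imset_f // setU11.
- apply/trivIsetP=> _ _ /imsetP[B1 B1P ->] /imsetP[B2 B2P ->] ne.
  have neB : B1 != B2 by apply: contraNneq ne => ->.
  rewrite -setI_eq0; apply/set0Pn=> -[j /setIP[]].
  case: (unliftP ord0 j) => [i ->|->]; last first.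
    by rewrite !ord0_insert0 => /eqP e1 /eqP e2; rewrite e1 e2 eqxx in neB.
  rewrite !lift_insert0 => i1 i2.
  have B1P' : B1 \in P by apply: mem_setU1_nonempty oP B1P _; apply/set0Pn; exists i.
  have B2P' : B2 \in P by apply: mem_setU1_nonempty oP B2P _; apply/set0Pn; exists i.
  by move/disjointFr: (trivIsetP trP _ _ B1P' B2P' neB) => /(_ i i1); rewrite i2.
- apply/imsetP=> -[B BP /esym e].
  have [eBo | neBo] := eqVneq B o.
    by move: (ord0_insert0 o B); rewrite e inE eBo eqxx.
  have : B \in P by move: BP; rewrite in_setU1 (negPf neBo).
  move/(memPn nP0)/set0Pn=> [i iB].
  by move: (lift_insert0 o B i); rewrite e inE iB.
Qed.

Lemma restrict_extend P o :
  partition P [set: 'I_n] -> o \in set0 |: P -> restrict (extend P o) = P.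
Proof.
case/and3P=> _ _ nP0 oP.
rewrite /restrict /extend -imset_comp (eq_imset _ (insert0K o)) imset_id.
apply/setP=> C; rewrite in_setD1 in_setU1.
have [CP | CnP] := boolP (C \in P); first by rewrite orbT andbT; apply: contraNneq nP0 => <-.
rewrite orbF; apply/negbTE/andP=> -[nC0 /eqP eCo].
by move: oP; rewrite in_setU1 -eCo (negbTE nC0) (negbTE CnP).
Qed.

Lemma block0_extend P o :
  partition P [set: 'I_n] -> o \in set0 |: P -> block0 (extend P o) = o.
Proof.
move=> pP oP; have /and3P[_ trQ _] := partition_extend pP oP.
rewrite /block0 (@def_pblock _ _ (insert0 o o)) ?insert0K ?ord0_insert0 //.
exact/imset_f/setU11.
Qed.

Lemma extend_restrict Q :
  partition Q [set: 'I_n.+1] -> extend (restrict Q) (block0 Q) = Q.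
Proof.
case/and3P=> /eqP covQ trQ nQ0.
set B0 := pblock Q ord0.
have B0Q : B0 \in Q by apply: pblock_mem; rewrite covQ inE.
have oB0 : ord0 \in B0 by rewrite mem_pblock covQ inE.
have B0P B : B \in Q -> ord0 \in B -> B = B0.
  by move=> BQ oB; rewrite /B0 (def_pblock trQ BQ oB).
have insert0_unshift : {in Q, forall B, insert0 (block0 Q) (unshift B) = B}.
  move=> B BQ; have [-> | neB] := eqVneq B B0.
    by rewrite /insert0 eqxx unshiftK setD1K.
  have nB0 : ord0 \notin B by apply: contra neB => oB; apply/eqP/B0P.
  suff ne : unshift B != block0 Q.
    rewrite /insert0 (negbTE ne) unshiftK; apply/setP=> j.
    by rewrite !inE; case: eqP => // ->; rewrite (negbTE nB0).
  have /set0Pn[j jB] : B != set0 by apply: contraNneq nQ0 => <-.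
  case: (unliftP ord0 j) jB nB0 => [i ->|-> ->//] iB _.
  apply/eqP=> /setP/(_ i); rewrite /block0 !inE iB => /esym.
  by move/disjointFr: (trivIsetP trQ _ _ BQ B0Q neB) => /(_ _ iB) ->.
rewrite /extend; have -> : block0 Q |: restrict Q = unshift @: Q.
  apply/setP=> C; rewrite in_setU1 !inE; apply/idP/idP.
    by case/orP=> [/eqP -> | /andP[_ //]]; apply: imset_f.
  move=> CQ; rewrite CQ andbT; have [C0|] := eqVneq C set0; last by rewrite orbT.
  move/imsetP: CQ => [B BQ eC]; apply/orP; left; apply/eqP.
  have /set0Pn[j jB] : B != set0 by apply: contraNneq nQ0 => <-.
  case: (unliftP ord0 j) jB => [i ->|->] jB.
    by move: C0; rewrite eC => /setP/(_ i); rewrite !inE jB.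
  by rewrite eC /block0 -/B0 (B0P B BQ jB).
by rewrite -imset_comp (eq_in_imset insert0_unshift) imset_id.
Qed.

Lemma extend_fiber P o : partition P [set: 'I_n] ->
  [&& partition (extend P o) [set: 'I_n.+1],
      restrict (extend P o) == P & block0 (extend P o) == o] = (o \in set0 |: P).
Proof.
move=> pP; apply/idP/idP=> [|oP]; last first.
  by rewrite partition_extend // restrict_extend // block0_extend // !eqxx.
case/and3P=> _ /eqP rP _; rewrite in_setU1; have [//|no0 /=] := eqVneq o set0.
rewrite -rP !inE no0 /= -{1}(insert0K o o).
exact/imset_f/imset_f/setU11.
Qed.

Lemma sum_partitions_succ (R : nmodType) (G : {set {set 'I_n.+1}} -> R) :
  (\sum_(Q | partition Q [set: 'I_n.+1]) G Q =
   \sum_(P | partition P [set: 'I_n]) \sum_(o in set0 |: P) G (extend P o))%R.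
Proof.
rewrite (partition_big restrict (fun P => partition P [set: 'I_n])); last first.
  exact: partition_restrict.
apply: eq_bigr => P pP; rewrite (reindex_onto (extend P) block0); last first.
  by move=> Q /andP[pQ /eqP <-]; apply: extend_restrict.
by apply: eq_bigl => o; rewrite -andbA extend_fiber.
Qed.

End ShiftPartition.

Lemma perm_sorted_sort_ord m (s t : seq 'I_m) :
  perm_eq s t -> sorted (fun i j : 'I_m => (i <= j)%N) t ->
  sort (fun i j : 'I_m => (i <= j)%N) s = t.
Proof.
move=> pst st; rewrite -[RHS](sorted_sort _ st); last by move=> i j k; apply: leq_trans.
apply/perm_sortP => // [i j|i j k|i j /anti_leq/val_inj //].
  exact: leq_total.
exact: leq_trans.
Qed.

Lemma perm_enum_imset (T T' : finType) (f : T -> T') (A : {set T}) t :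
  injective f -> perm_eq (enum A) t -> perm_eq (enum (f @: A)) (map f t).
Proof.
move=> f_inj pt; apply: uniq_perm; first exact: enum_uniq.
  by rewrite (map_inj_uniq f_inj) -(perm_uniq pt) enum_uniq.
move=> x; rewrite mem_enum; apply/imsetP/mapP => -[a aA ->]; exists a => //.
  by rewrite -(perm_mem pt) mem_enum.
by rewrite -mem_enum (perm_mem pt).
Qed.

Lemma perm_enum_setU1 (T : finType) (a : T) (A : {set T}) t :
  a \notin A -> perm_eq (enum A) t -> perm_eq (enum (a |: A)) (a :: t).
Proof.
move=> aA pt; apply: uniq_perm; first exact: enum_uniq.
  by rewrite /= -(perm_uniq pt) enum_uniq -(perm_mem pt) mem_enum aA.
by move=> x; rewrite mem_enum in_setU1 in_cons -(perm_mem pt) mem_enum.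
Qed.

Lemma block_max_shift n (B : {set 'I_n}) :
  B != set0 -> block_max (shift B) = (block_max B).+1.
Proof.
rewrite -card_gt0 => B_gt0; rewrite /block_max big_imset /=; last first.
  by move=> i j _ _; apply: lift_inj.
rewrite (eq_bigr (fun i : 'I_n => (i : nat).+1)) //.
have [i0 i0B max_i0] := eq_bigmax_cond (fun i : 'I_n => (i : nat)) B_gt0.
apply/eqP; rewrite max_i0 eqn_leq; apply/andP; split.
  apply/bigmax_leqP => i iB; rewrite ltnS -max_i0.
  exact: (@leq_bigmax_cond _ (mem B) (fun i : 'I_n => (i : nat)) _ iB).
exact: (@leq_bigmax_cond _ (mem B) (fun i : 'I_n => (i : nat).+1) _ i0B).
Qed.

Lemma block_max_setU0 n (B : {set 'I_n.+1}) : block_max (ord0 |: B) = block_max B.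
Proof.
have [|oB] := boolP (ord0 \in B); first by rewrite -sub1set => /setUidPr ->.
by rewrite /block_max big_setU1 //= max0n.
Qed.

Lemma block_max_insert0 n (o B : {set 'I_n}) :
  block_max (insert0 o B) = block_max (shift B).
Proof. by rewrite /insert0; case: eqP => _; rewrite ?block_max_setU0. Qed.

Lemma block_max_inj m (Q : {set {set 'I_m}}) :
  trivIset Q -> set0 \notin Q -> {in Q &, injective (@block_max m)}.
Proof.
move=> trQ nQ0 B C BQ CQ.
have B_gt0 : (0 < #|B|)%N by rewrite card_gt0 (memPn nQ0).
have C_gt0 : (0 < #|C|)%N by rewrite card_gt0 (memPn nQ0).
rewrite /block_max.
have [i iB ->] := eq_bigmax_cond (fun i : 'I_m => (i : nat)) B_gt0.
have [j jC ->] := eq_bigmax_cond (fun i : 'I_m => (i : nat)) C_gt0.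
move/val_inj=> eij; apply/eqP; apply: contraTT isT => neBC.
by move/disjointFr: (trivIsetP trQ _ _ BQ CQ neBC) => /(_ _ iB); rewrite eij jC.
Qed.

Lemma sorted_blocksE m (Q : {set {set 'I_m}}) s :
  trivIset Q -> set0 \notin Q -> perm_eq (enum Q) s ->
  sorted (relpre (@block_max m) leq) s -> sorted_blocks Q = s.
Proof.
move=> trQ nQ0 ps ss; rewrite /sorted_blocks -[RHS](sorted_sort _ ss); last first.
  by move=> B C D; apply: leq_trans.
apply/perm_sort_inP => // [B C _ _|B C D _ _ _|B C].
- exact: leq_total.
- exact: leq_trans.
- by rewrite !mem_enum => BQ CQ /anti_leq; apply: (block_max_inj trQ nQ0 BQ CQ).
Qed.

Lemma sorted_block_max_shift n (P : {set {set 'I_n}}) :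
  set0 \notin P -> sorted leq (map (fun B => block_max (shift B)) (sorted_blocks P)).
Proof.
move=> nP0; rewrite (eq_in_map _ (succn \o @block_max n) _).1; last first.
  move=> B; rewrite /sorted_blocks mem_sort mem_enum => BP /=.
  by rewrite block_max_shift // (memPn nP0).
rewrite map_comp sorted_map (eq_sorted (e' := leq)) => [|a b]; last by rewrite /= ltnS.
by rewrite sorted_map; apply: sort_sorted => B C; apply: leq_total.
Qed.

Lemma sorted_blocks_extend n (P : {set {set 'I_n}}) o t :
  partition P [set: 'I_n] -> o \in set0 |: P -> perm_eq (enum (o |: P)) t ->
  sorted leq (map (fun B => block_max (shift B)) t) ->
  sorted_blocks (extend P o) = map (insert0 o) t.
Proof.
move=> pP oP pt st; have /and3P[_ trQ nQ0] := partition_extend pP oP.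
apply: sorted_blocksE => //; first exact/perm_enum_imset/pt/(can_inj (insert0K o)).
move: st; rewrite !sorted_map; apply: sub_sorted => B C.
by rewrite /relpre /= !block_max_insert0.
Qed.

Section ExtendWord.
Variables (F : fieldType) (M : lmodType F) (rhdM : M -> M -> M) (n : nat).
Variable y : 'I_n.+1 -> M.
Let y' i := y (lift ord0 i).
Local Notation leq_ord m := (fun i j : 'I_m => (i <= j)%N).

Lemma sorted_map_lift0 (s : seq 'I_n) :
  sorted (leq_ord n) s -> sorted (leq_ord n.+1) (map (lift ord0) s).
Proof. by rewrite sorted_map; apply: sub_sorted => i j; rewrite /relpre /=. Qed.

Lemma sort_enum_shift (B : {set 'I_n}) :
  sort (leq_ord n.+1) (enum (shift B)) = map (lift ord0) (sort (leq_ord n) (enum B)).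
Proof.
apply: perm_sorted_sort_ord; last by apply/sorted_map_lift0/sort_sorted => i j; apply: leq_total.
by apply: perm_enum_imset; [apply: lift_inj | rewrite perm_sym perm_sort].
Qed.

Lemma sort_enum_setU0_shift (B : {set 'I_n}) :
  sort (leq_ord n.+1) (enum (ord0 |: shift B)) =
  ord0 :: map (lift ord0) (sort (leq_ord n) (enum B)).
Proof.
apply: perm_sorted_sort_ord.
  apply: perm_enum_setU1; first by rewrite ord0_shift.
  by apply: perm_enum_imset; [apply: lift_inj | rewrite perm_sym perm_sort].
rewrite /= path_min_sorted; last exact/allP.
by apply/sorted_map_lift0/sort_sorted => i j; apply: leq_total.
Qed.

Lemma block_val_shift (B : {set 'I_n}) : block_val rhdM y (shift B) = block_val rhdM y' B.
Proof.
rewrite /block_val sort_enum_shift.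
by case: (sort _ (enum B)) => [|b bs] //=; rewrite -map_comp.
Qed.

Lemma block_val_setU0_shift (B : {set 'I_n}) : B != set0 ->
  block_val rhdM y (ord0 |: shift B) = rhdM (y ord0) (block_val rhdM y' B).
Proof.
case/set0Pn=> i iB; rewrite /block_val sort_enum_setU0_shift.
case E: (sort _ (enum B)) => [|b bs] /=; last by rewrite -map_comp.
by move: (mem_sort (leq_ord n) (enum B) i); rewrite E mem_enum iB.
Qed.

Lemma block_val_set0_1 : block_val rhdM y [set ord0] = y ord0.
Proof. by rewrite /block_val enum_set1. Qed.

Local Open Scope ring_scope.
Variables (A : algType F) (iota : M -> A).

Lemma part_word_extend_set0 (P : {set {set 'I_n}}) :
  partition P [set: 'I_n] ->
  part_word rhdM y iota (extend P set0) = iota (y ord0) * part_word rhdM y' iota P.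
Proof.
move=> pP; have nP0 : set0 \notin P by case/and3P: pP.
rewrite /part_word.
have -> : sorted_blocks (extend P set0) = map (insert0 set0) (set0 :: sorted_blocks P).
  apply: sorted_blocks_extend; rewrite ?setU11 //.
    by apply: perm_enum_setU1 => //; rewrite perm_sym perm_sort.
  rewrite /= path_min_sorted; first exact: sorted_block_max_shift.
  by apply/allP=> k _; rewrite /shift imset0 /block_max big_set0.
rewrite big_map big_cons.
rewrite /insert0 eqxx /shift imset0 setU0 block_val_set0_1; congr (_ * _).
rewrite big_seq [RHS]big_seq; apply: eq_bigr => B.
rewrite mem_sort mem_enum => BP; rewrite (negbTE (memPn nP0 _ BP)).
by rewrite block_val_shift.
Qed.

Lemma part_word_extend (P : {set {set 'I_n}}) o :
  partition P [set: 'I_n] -> o \in P ->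
  part_word rhdM y iota (extend P o) =
  \prod_(B <- sorted_blocks P)
     iota (if B == o then rhdM (y ord0) (block_val rhdM y' B) else block_val rhdM y' B).
Proof.
move=> pP oP; have nP0 : set0 \notin P by case/and3P: pP.
rewrite /part_word.
have -> : sorted_blocks (extend P o) = map (insert0 o) (sorted_blocks P).
  apply: sorted_blocks_extend; rewrite ?inE ?oP ?orbT //.
    by rewrite (setUidPr _) ?sub1set // perm_sym perm_sort.
  exact: sorted_block_max_shift.
rewrite big_map big_seq [RHS]big_seq; apply: eq_bigr => B.
rewrite mem_sort mem_enum => BP; rewrite /insert0; case: eqP => _.
  by rewrite block_val_setU0_shift // (memPn nP0).
by rewrite block_val_shift.
Qed.

End ExtendWord.

Local Open Scope ring_scope.

Section DerivationProduct.
Variables (R : pzRingType) (d : R -> R).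
Hypotheses (dD : {morph d : u v / u + v}) (dM : forall u v, d (u * v) = d u * v + u * d v).

Lemma derivation0 : d 0 = 0.
Proof. by apply: (@addrI _ (d 0)); rewrite -dD !addr0. Qed.

Lemma derivation1 : d 1 = 0.
Proof.
have := dM 1 1; rewrite !mulr1 mul1r => d1_double.
by apply: (@addrI _ (d 1)); rewrite addr0 -d1_double.
Qed.

Lemma derivation_prod (T : eqType) (s : seq T) (G : T -> R) : uniq s ->
  d (\prod_(B <- s) G B) = \sum_(o <- s) \prod_(B <- s) (if B == o then d (G B) else G B).
Proof.
elim: s => [|a s IHs] /=; first by rewrite !big_nil derivation1.
case/andP=> a_notin_s s_uniq; rewrite big_cons dM IHs // big_cons big_cons eqxx.
congr (_ * _ + _).
  by apply: eq_big_seq => B Bs; case: eqP => // eBa; rewrite -eBa Bs in a_notin_s.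
rewrite mulr_sumr; apply: eq_big_seq => o os; rewrite big_cons.
by case: eqP => // eao; rewrite eao os in a_notin_s.
Qed.

End DerivationProduct.

Section GavrilovK.
Variables (F : fieldType) (M : lmodType F) (rhdM : M -> M -> M).
Variables (A : algType F) (iota : M -> A) (rhd : A -> A -> A) (K : A -> A).
Hypotheses (rhdD : forall W, {morph rhd W : U V / U + V})
  (rhd_M : forall x x' : M, rhd (iota x) (iota x') = iota (rhdM x x'))
  (rhd_der : forall (x : M) (V W : A),
      rhd (iota x) (V * W) = rhd (iota x) V * W + V * rhd (iota x) W).
Hypotheses (KD : {morph K : U V / U + V}) (K_1 : K 1 = 1)
  (K_rec : forall (x : M) (U : A), K (iota x * U) = iota x * K U - K (rhd (iota x) U)).

Lemma sum_part_word_extend n (y : 'I_n.+1 -> M) (P : {set {set 'I_n}}) :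
  partition P [set: 'I_n] ->
  \sum_(o in set0 |: P) part_word rhdM y iota (extend P o) =
  iota (y ord0) * part_word rhdM (fun i => y (lift ord0 i)) iota P
  + rhd (iota (y ord0)) (part_word rhdM (fun i => y (lift ord0 i)) iota P).
Proof.
move=> pP; have nP0 : set0 \notin P by case/and3P: pP.
rewrite big_setU1 //= part_word_extend_set0 //; congr (_ + _).
rewrite {2}/part_word (derivation_prod (rhd_der _)) ?sort_uniq ?enum_uniq //.
rewrite /sorted_blocks (perm_big _ (permEl (perm_sort _ _))) big_enum /=.
apply: eq_bigr => o oP; rewrite part_word_extend //; apply: eq_bigr => B _.
by case: eqP => _; rewrite ?rhd_M.
Qed.

Lemma K_sum_part_word n (y : 'I_n -> M) :
  K (\sum_(P | partition P [set: 'I_n]) part_word rhdM y iota P) = \prod_(i < n) iota (y i).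
Proof.
have rhd0 W : rhd W 0 = 0 by apply: derivation0.
elim: n y => [|n IHn] y.
  have -> : [set: 'I_0] = set0 by apply/setP => -[].
  rewrite big_ord0 (big_pred1 set0) => [|P]; last exact: partition_set0.
  by rewrite /part_word /sorted_blocks enum_set0 big_nil K_1.
rewrite sum_partitions_succ (eq_bigr _ (sum_part_word_extend y)) big_split /=.
by rewrite -mulr_sumr -(big_morph _ (rhdD _) (rhd0 _)) KD K_rec subrK IHn big_ord_recl.
Qed.

End GavrilovK.

Theorem proposition2p19
  (* k : a field of characteristic zero *)
  (F : fieldType) (charF0 : [pchar F] =i pred0)
  (* (M, ▷) : a magmatic algebra over k *)
  (M : lmodType F) (rhdM : M -> M -> M)
  (rhdM_linl : forall (a : F) (x x' z : M),
      rhdM (a *: x + x') z = a *: rhdM x z + rhdM x' z)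
  (rhdM_linr : forall (a : F) (z x x' : M),
      rhdM z (a *: x + x') = a *: rhdM z x + rhdM z x')
  (* (A, iota) : the tensor algebra T(M), given by its universal property *)
  (A : algType F) (iota : {linear M -> A})
  (A_univ : forall (B : algType F) (f : {linear M -> B}),
      exists g : {lrmorphism A -> B},
        (forall x, g (iota x) = f x) /\
        (forall g' : {lrmorphism A -> B}, (forall x, g' (iota x) = f x) -> g' =1 g))
  (* the extension of ▷ to T(M) *)
  (rhd : A -> A -> A)
  (rhd_linl : forall (a : F) (U U' W : A), rhd (a *: U + U') W = a *: rhd U W + rhd U' W)
  (rhd_linr : forall (a : F) (W U U' : A), rhd W (a *: U + U') = a *: rhd W U + rhd W U')
  (rhd_M : forall x x' : M, rhd (iota x) (iota x') = iota (rhdM x x'))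
  (rhd_1 : forall W : A, rhd 1 W = W)
  (rhd_der : forall (x : M) (V W : A),
      rhd (iota x) (V * W) = rhd (iota x) V * W + V * rhd (iota x) W)
  (rhd_mul : forall (x : M) (V W : A),
      rhd (iota x * V) W = rhd (iota x) (rhd V W) - rhd (rhd (iota x) V) W)
  (* Gavrilov's K-map *)
  (K : A -> A)
  (K_lin : forall (a : F) (U U' : A), K (a *: U + U') = a *: K U + K U')
  (K_1 : K 1 = 1)
  (K_M : forall x : M, K (iota x) = iota x)
  (K_rec : forall (x : M) (U : A), K (iota x * U) = iota x * K U - K (rhd (iota x) U))
  (* its inverse K^{-1} *)
  (Kinv : A -> A) (KinvK : cancel K Kinv) (KKinv : cancel Kinv K)
  (n : nat) (y : 'I_n -> M) :
  Kinv (\prod_(i < n) iota (y i)) =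
  \sum_(P : {set {set 'I_n}} | partition P [set: 'I_n]) part_word rhdM y iota P.
Proof.
have rhdD W : {morph rhd W : U V / U + V}.
  by move=> U V; have := rhd_linr 1 W U V; rewrite !scale1r.
have KD : {morph K : U V / U + V}.
  by move=> U V; have := K_lin 1 U V; rewrite !scale1r.
by rewrite -(K_sum_part_word rhdD rhd_M rhd_der KD K_1 K_rec) KinvK.
Qed.
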